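(* Let $M$ be an exact $\mathfrak{K}$-module. Assume that one of the pieces $M_0$, $M_1$ or $M_2$ is uniquely $p$-divisible. Then the other two pieces are uniquely $p$-divisible as well. And there are a $\mathbb{Z}/2$-graded $\mathbb{Z}[1/p]$-module $X$ and $\mathbb{Z}/2$-graded $\mathbb{Z}[\vartheta,1/p]$-modules $Y,Z$ such that $M$ is isomorphic to the exact $\mathfrak{K}$-module $E(X,Y,Z)$.
   Context: Fix a prime $p$, $N(x)=1+x+\dots+x^{p-1}$, and $\vartheta$ a primitive $p$-th root of unity. A $\mathfrak{K}$-module $M$ amounts to $\mathbb{Z}/2$-graded abelian groups $M_0,M_1,M_2$ with homomorphisms $\alpha_{jk}\colon M_k\to M_j$ ($j\neq k$; $\alpha_{12},\alpha_{21}$ grading-reversing, others grading-preserving) with $\alpha_{jk}\alpha_{km}=0$ for $\{j,k,m\}=\{0,1,2\}$ and, for $t_0:=1-\alpha_{02}\alpha_{20}$, $s_1:=1-\alpha_{12}\alpha_{21}$, $t_2:=1-\alpha_{20}\alpha_{02}$, $s_2:=1-\alpha_{21}\alpha_{12}$: $\alpha_{01}\alpha_{10}=N(t_0)$, $\alpha_{10}\alpha_{01}=N(s_1)$, $N(t_2)+N(s_2)=p$. Morphisms are triples of grading-preserving maps commuting with all $\alpha_{jk}$. $M$ is exact if the cyclic sequences $M_0\xrightarrow{\alpha_{10}}M_1\xrightarrow{\alpha_{21}}M_2\xrightarrow{\alpha_{02}}M_0$ and $M_0\xrightarrow{\alpha_{20}}M_2\xrightarrow{\alpha_{12}}M_1\xrightarrow{\alpha_{01}}M_0$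 are exact. Uniquely $p$-divisible: multiplication by $p$ bijective. For $X,Y,Z$ as in the claim, $E(X,Y,Z)$ is the exact $\mathfrak{K}$-module with $M_0=X\oplus Y$, $M_1=X\oplus Z$, $M_2=Y\oplus\Sigma Z$ ($\Sigma Z$ is $Z$ with opposite parity), $\alpha_{01}(x,z)=(x,0)$, $\alpha_{10}(x,y)=(px,0)$, $\alpha_{12}(y,z)=(0,(1-\vartheta)z)$, $\alpha_{21}(x,z)=(0,z)$, $\alpha_{20}(x,y)=(y,0)$, $\alpha_{02}(y,z)=(0,(1-\vartheta)y)$. *)

From HB Require Import structures.
From mathcomp Require Import all_boot all_order all_algebra.
Set Implicit Arguments. Unset Strict Implicit. Unset Printing Implicit Defensive.
Import GRing.Theory.
Local Open Scope ring_scope.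

Definition addmap (A B : zmodType) (f : A -> B) : Prop :=
  forall x y, f (x + y) = f x + f y.

(* A Z/2-graded abelian group G = G_even (+) G_odd is encoded as an abelian
   group G with an additive idempotent g : G -> G (projection onto G_even
   along G_odd). *)
Definition is_grading (G : zmodType) (g : G -> G) : Prop :=
  addmap g /\ forall x, g (g x) = g x.

Definition gr_pres (A B : zmodType) (g : A -> A) (g' : B -> B) (f : A -> B) :=
  forall x, f (g x) = g' (f x).

(* f is grading-reversing: f maps A_even to B_odd and A_odd to B_even,
   i.e. f o g = (1 - g') o f *)
Definition gr_rev (A B : zmodType) (g : A -> A) (g' : B -> B) (f : A -> B) :=
  forall x, f (g x) = f x - g' (f x).

Definition Nop (p : nat) (G : zmodType) (f : G -> G) : G -> G :=
  fun x => \sum_(i < p) iter i f x.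

Definition uniq_pdiv (p : nat) (G : zmodType) : Prop :=
  bijective (fun x : G => x *+ p).

Unset Implicit Arguments.
Record rawK := RawK {
  K0 : zmodType; K1 : zmodType; K2 : zmodType;
  g0 : K0 -> K0; g1 : K1 -> K1; g2 : K2 -> K2;
  a01 : K1 -> K0; a10 : K0 -> K1;
  a12 : K2 -> K1; a21 : K1 -> K2;
  a02 : K2 -> K0; a20 : K0 -> K2 }.
Set Implicit Arguments.

Definition is_Kmodule (p : nat) (M : rawK) : Prop :=
  [/\ [/\ is_grading (g0 M), is_grading (g1 M) & is_grading (g2 M)],
      [/\ addmap (a01 M), addmap (a10 M) & addmap (a12 M)]
        /\ [/\ addmap (a21 M), addmap (a02 M) & addmap (a20 M)],
      [/\ gr_pres (g1 M) (g0 M) (a01 M), gr_pres (g0 M) (g1 M) (a10 M) &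
          gr_rev (g2 M) (g1 M) (a12 M)]
        /\ [/\ gr_rev (g1 M) (g2 M) (a21 M),
          gr_pres (g2 M) (g0 M) (a02 M) & gr_pres (g0 M) (g2 M) (a20 M)],
      [/\ forall x, a01 M (a12 M x) = 0, forall x, a02 M (a21 M x) = 0 &
          forall x, a10 M (a02 M x) = 0]
        /\ [/\ forall x, a12 M (a20 M x) = 0,
          forall x, a20 M (a01 M x) = 0 & forall x, a21 M (a10 M x) = 0] &
      [/\ forall x, a01 M (a10 M x) = Nop p (fun y => y - a02 M (a20 M y)) x,
          forall x, a10 M (a01 M x) = Nop p (fun y => y - a12 M (a21 M y)) x &
          forall x, Nop p (fun y => y - a20 M (a02 M y)) x
                    + Nop p (fun y => y - a21 M (a12 M y)) x = x *+ p]].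

Definition is_exactK (M : rawK) : Prop :=
  [/\ forall y, a21 M y = 0 <-> exists x, a10 M x = y,
      forall y, a02 M y = 0 <-> exists x, a21 M x = y &
      forall y, a10 M y = 0 <-> exists x, a02 M x = y]
  /\ [/\ forall y, a12 M y = 0 <-> exists x, a20 M x = y,
      forall y, a01 M y = 0 <-> exists x, a12 M x = y &
      forall y, a20 M y = 0 <-> exists x, a01 M x = y].

Definition Kiso (M N : rawK) : Prop :=
  exists (f0 : K0 M -> K0 N) (f1 : K1 M -> K1 N) (f2 : K2 M -> K2 N),
  [/\ [/\ addmap f0, addmap f1 & addmap f2],
      [/\ bijective f0, bijective f1 & bijective f2],
      [/\ gr_pres (g0 M) (g0 N) f0, gr_pres (g1 M) (g1 N) f1
          & gr_pres (g2 M) (g2 N) f2] &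
      [/\ forall x, f0 (a01 M x) = a01 N (f1 x),
          forall x, f1 (a10 M x) = a10 N (f0 x) &
          forall x, f1 (a12 M x) = a12 N (f2 x)]
      /\ [/\ forall x, f2 (a21 M x) = a21 N (f1 x),
          forall x, f0 (a02 M x) = a02 N (f2 x) &
          forall x, f2 (a20 M x) = a20 N (f0 x)]].

(* Graded Z[1/p]-module: graded abelian group that is uniquely p-divisible. *)
Definition grZp (p : nat) (X : zmodType) (gX : X -> X) : Prop :=
  is_grading gX /\ uniq_pdiv p X.

(* Graded Z[theta,1/p]-module, Z[theta] = Z[x]/(1 + x + ... + x^(p-1)):
   graded, uniquely p-divisible abelian group with a grading-preserving
   additive endomorphism th (action of theta) with N(th) = 0. *)
Definition grZthp (p : nat) (Y : zmodType) (gY : Y -> Y) (th : Y -> Y) :=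
  [/\ is_grading gY, uniq_pdiv p Y, addmap th, gr_pres gY gY th &
      forall y, Nop p th y = 0].

Definition EK (p : nat) (X Y Z : zmodType) (gX : X -> X) (gY : Y -> Y)
  (thY : Y -> Y) (gZ : Z -> Z) (thZ : Z -> Z) : rawK :=
  @RawK (X * Y)%type (X * Z)%type (Y * Z)%type
    (fun v => (gX v.1, gY v.2))
    (fun v => (gX v.1, gZ v.2))
    (fun v => (gY v.1, v.2 - gZ v.2))          (* Sigma Z: opposite parity *)
    (fun v => (v.1, 0))
    (fun v => (v.1 *+ p, 0))
    (fun v => (0, v.2 - thZ v.2))
    (fun v => (0, v.2))
    (fun v => (0, v.1 - thY v.1))
    (fun v => (v.2, 0)).

From HB Require Import structures.
From mathcomp Require Import all_boot all_order all_algebra.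
Set Implicit Arguments. Unset Strict Implicit. Unset Printing Implicit Defensive.
Import GRing.Theory.
Local Open Scope ring_scope.

(* Write u = a02 a20 on M0, and e = a20 a02, f = a21 a12 on M2.  For an additive
   t one has N(1 - t) = p - t W(1 - t) with W(s) = sum_(i < p) sum_(j < i) s^j, so
   the norm relations read p = a01 a10 + u W(1 - u) on M0 and
   p = e W(1 - e) + f W(1 - f) on M2, with summands annihilating each other.
   Once p is invertible these are splittings into complementary idempotents:
   ker f = im e, ker e = im f and M2 = ker f (+) ker e, and similarly on M0.
   Combined with exactness this carries unique p-divisibility from M2 to M0,
   and to M1 by the symmetry exchanging the indices 0 and 1.  Conversely, if M0
   is uniquely p-divisible, f restricts to an automorphism of ker a02 on which
   N(1 - f) vanishes; since N(1 - X) = X^(p-1) mod p, multiplication by p is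
   invertible on ker a02, hence on M2.  Finally X = ker a20, Y = ker f and
   Z = ker e, with theta acting as 1 - e on Y and as 1 - f on Z, and the
   splittings give M = E(X, Y, Z); this last step does not use exactness. *)

(** * Additive maps and norms *)

Section AdditiveMaps.
Variables (G H : zmodType) (f : G -> H).
Hypothesis af : addmap f.

Lemma addmap0 : f 0 = 0.
Proof. by apply: (addrI (f 0)); rewrite -af !addr0. Qed.

Definition additive_of : {additive G -> H} :=
  HB.pack f (GRing.isNmodMorphism.Build G H f (addmap0, af)).

Lemma addmapB x y : f (x - y) = f x - f y. Proof. exact: (raddfB additive_of). Qed.

Lemma addmapMn x n : f (x *+ n) = f x *+ n. Proof. exact: (raddfMn additive_of). Qed.

Lemma addmap_sum (I : Type) (r : seq I) (P : pred I) (F : I -> G) :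
  f (\sum_(i <- r | P i) F i) = \sum_(i <- r | P i) f (F i).
Proof. exact: (raddf_sum additive_of). Qed.

End AdditiveMaps.

Lemma addmap_comp (G H K : zmodType) (f : H -> K) (g : G -> H) :
  addmap f -> addmap g -> addmap (fun x => f (g x)).
Proof. by move=> af ag x y; rewrite ag af. Qed.

Lemma addmap_pair (G H K : zmodType) (f : G -> H) (g : G -> K) :
  addmap f -> addmap g -> addmap (fun x => (f x, g x)).
Proof. by move=> af ag x y; rewrite af ag. Qed.

Lemma addmap_sub1 (G : zmodType) (u : G -> G) : addmap u -> addmap (fun x => x - u x).
Proof. by move=> au x y; rewrite au opprD addrACA. Qed.

Lemma addmap_iter (G : zmodType) (t : G -> G) n : addmap t -> addmap (iter n t).
Proof. by move=> at_; elim: n => [//|n IHn] x y /=; rewrite IHn at_. Qed.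

Lemma addmap_sumf (G H : zmodType) (I : Type) (r : seq I) (P : pred I)
    (F : I -> G -> H) :
  (forall i, addmap (F i)) -> addmap (fun x => \sum_(i <- r | P i) F i x).
Proof. by move=> aF x y; rewrite -big_split; apply: eq_bigr => i _; rewrite aF. Qed.

Lemma sub1_morph (G H : zmodType) (h : G -> H) (u : G -> G) (u' : H -> H) :
  addmap h -> {morph h : x / u x >-> u' x} -> {morph h : x / x - u x >-> x - u' x}.
Proof. by move=> ah hu x; rewrite addmapB // hu. Qed.

Lemma grading_sub1 (G : zmodType) (g : G -> G) :
  is_grading g -> is_grading (fun x => x - g x).
Proof.
case=> ag gg; split=> [|x]; first exact: addmap_sub1.
by rewrite addmapB // gg subrr subr0.
Qed.

(* [Nquo p (1 - u)] is [(p - N(1 - u)) / u], see [Nop_sub1]. *)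
Definition Nquo (p : nat) (G : zmodType) (t : G -> G) (x : G) : G :=
  \sum_(i < p) \sum_(j < i) iter j t x.

Section Norms.
Variables (p : nat) (G : zmodType).

Lemma addmap_Nquo (t : G -> G) : addmap t -> addmap (Nquo p t).
Proof. by move=> at_; do 2![apply: addmap_sumf => ?]; apply: addmap_iter. Qed.

Lemma Nop_fixed (t : G -> G) x : t x = x -> Nop p t x = x *+ p.
Proof.
move=> tx; rewrite /Nop (eq_bigr (fun=> x)) ?sumr_const ?card_ord // => i _.
by elim: (nat_of_ord i) => [//|n /= ->].
Qed.

Lemma Nop_sub1 (u : G -> G) : addmap u -> forall x,
  Nop p (fun y => y - u y) x = x *+ p - u (Nquo p (fun y => y - u y) x).
Proof.
move=> au x; set t := fun y => y - u y.
have iter_t i : iter i t x = x - u (\sum_(j < i) iter j t x).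
  elim: i => [|i IHi]; first by rewrite big_ord0 addmap0 // subr0.
  by rewrite big_ord_recr /= au opprD addrA -IHi.
rewrite /Nop (eq_bigr _ (fun (i : 'I_p) _ => iter_t i)) big_split /= sumr_const.
by rewrite card_ord sumrN /Nquo (addmap_sum au).
Qed.

Section Intertwining.
Variables (H : zmodType) (h : G -> H) (t : G -> G) (t' : H -> H).
Hypotheses (ah : addmap h) (ht : {morph h : x / t x >-> t' x}).

Lemma iter_morph n : {morph h : x / iter n t x >-> iter n t' x}.
Proof. by elim: n => [//|n IHn] x /=; rewrite ht IHn. Qed.

Lemma Nop_morph : {morph h : x / Nop p t x >-> Nop p t' x}.
Proof. by move=> x; rewrite addmap_sum //; apply: eq_bigr => i _; apply: iter_morph. Qed.

Lemma Nquo_morph : {morph h : x / Nquo p t x >-> Nquo p t' x}.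
Proof.
move=> x; rewrite addmap_sum //; apply: eq_bigr => i _.
by rewrite addmap_sum //; apply: eq_bigr => j _; apply: iter_morph.
Qed.

End Intertwining.

Lemma Nquo_sub1_ker (u : G -> G) :
  addmap u -> forall x, u x = 0 -> u (Nquo p (fun y => y - u y) x) = 0.
Proof.
move=> au x ux; rewrite (Nquo_morph au (sub1_morph au (fun=> erefl))) ux.
exact/addmap0/addmap_Nquo/addmap_sub1.
Qed.

End Norms.

Section DivisionByP.
Variable p : nat.

Lemma uniq_pdiv_inj_surj (G : zmodType) :
  (forall x : G, x *+ p = 0 -> x = 0) -> (forall y : G, exists x, x *+ p = y) ->
  uniq_pdiv p G.
Proof.
move=> inj surj; have surj' (y : G) : exists x, x *+ p == y.
  by have [x <-] := surj y; exists x.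
exists (fun y => xchoose (surj' y)) => [x|y]; last exact/eqP/(xchooseP (surj' y)).
apply/eqP; rewrite -subr_eq0; apply/eqP/inj.
by rewrite mulrnBl (eqP (xchooseP (surj' _))) subrr.
Qed.

Lemma addmap_divp (G H : zmodType) (ipG : G -> G) (ipH : H -> H) (h : G -> H) :
  addmap h -> cancel ipG (fun x => x *+ p) -> cancel (fun y => y *+ p) ipH ->
  {morph h : x / ipG x >-> ipH x}.
Proof. by move=> ah ipGK mulpK x; rewrite -{2}(ipGK x) addmapMn // mulpK. Qed.

Section Inverse.
Variables (G : zmodType) (ip : G -> G).
Hypotheses (mulpK : cancel (fun x => x *+ p) ip) (ipK : cancel ip (fun x => x *+ p)).

Lemma mulp_inv0 : ip 0 = 0.
Proof. by rewrite -{1}(mul0rn G p) mulpK. Qed.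

Lemma addmap_ip : addmap ip.
Proof. by move=> x y; rewrite -{1}(ipK x) -{1}(ipK y) -mulrnDl mulpK. Qed.

Lemma split_ker (A B : G -> G) : (forall x, x *+ p = A x + B x) -> addmap B ->
  forall x, B x = 0 -> x = A (ip x).
Proof.
move=> split aB x Bx; rewrite -{1}(ipK x) split (addmap_divp aB ipK mulpK) Bx.
by rewrite mulp_inv0 addr0.
Qed.

End Inverse.

Lemma addmap_mulp_eq0 (G H : zmodType) (h : G -> H) (ipH : H -> H) :
  addmap h -> cancel (fun y => y *+ p) ipH -> forall x, x *+ p = 0 -> h x = 0.
Proof.
move=> ah mulpK x px0; rewrite -[h x]mulpK -addmapMn // px0 (addmap0 ah).
exact: mulp_inv0.
Qed.

End DivisionByP.

Lemma norm_1subX_modp (p : nat) : prime p ->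
  exists R : {poly int}, \sum_(i < p) (1 - 'X)^+i - 'X^(p.-1) = R *+ p.
Proof.
move=> p_pr; set D := _ - _.
have Fp_dvd (z : int) : (z%:~R : 'F_p) = 0 -> (p%:Z %| z)%Z.
  rewrite dvdzE; have charFp := pchar_Fp p_pr.
  case: z => n /=; first by rewrite (dvdn_pcharf charFp) => <-; rewrite pmulrn.
  by rewrite NegzE mulrNz => /eqP; rewrite oppr_eq0 -pmulrn -(dvdn_pcharf charFp).
have D_Fp : map_poly (intr : int -> 'F_p) D = 0.
  rewrite /D rmorphB rmorph_sum /= map_polyXn.
  under eq_bigr => i _ do rewrite rmorphXn rmorphB rmorph1 /= map_polyX.
  set S := \sum_(i < p) _.
  have charFpX : p \in [pchar {poly 'F_p}] by rewrite pchar_poly pchar_Fp.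
  have natFpX : [pchar {poly 'F_p}].-nat p by rewrite pnatE.
  have frob : (1 - 'X : {poly 'F_p}) ^+ p = 1 - 'X^p.
    by rewrite exprDn_pchar // exprNn_pchar // expr1n.
  have XS : 'X * S = 'X^p.
    have := subrX1 (1 - 'X : {poly 'F_p}) p.
    rewrite frob addrAC subrr add0r addrAC subrr add0r mulNr => /eqP.
    by rewrite eqr_opp => /eqP <-.
  have : 'X * (S - 'X^(p.-1)) = 0 by rewrite mulrBr XS -exprS prednK ?prime_gt0 ?subrr.
  by move/eqP; rewrite mulf_eq0 polyX_eq0 => /eqP.
exists (\poly_(k < size D) (D`_k %/ p%:Z)%Z); apply/polyP => k.
rewrite coefMn coef_poly; case: ltnP => [_|le_D_k]; last by rewrite nth_default ?mul0rn.
by rewrite -mulr_natr natz divzK // Fp_dvd // -coef_map D_Fp coef0.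
Qed.

Section PolyAction.
Variables (G : zmodType) (f : G -> G).
Hypothesis af : addmap f.
Implicit Types (P Q : {poly int}) (x : G).

Definition poly_act P x : G := \sum_(k < size P) iter k f x *~ P`_k.

Lemma poly_act_widen n P x : (size P <= n)%N ->
  poly_act P x = \sum_(k < n) iter k f x *~ P`_k.
Proof.
move=> le_P_n; rewrite /poly_act (big_ord_widen n (fun k => iter k f x *~ P`_k) le_P_n).
rewrite big_mkcond; apply: eq_bigr => k _; case: ltnP => // le_P_k.
by rewrite nth_default // mulr0z.
Qed.

Lemma poly_act0 x : poly_act 0 x = 0.
Proof. by rewrite /poly_act size_poly0 big_ord0. Qed.

Lemma poly_actD P Q x : poly_act (P + Q) x = poly_act P x + poly_act Q x.
Proof.
rewrite !(@poly_act_widen (maxn (size P) (size Q))) ?leq_maxl ?leq_maxr ?size_polyD //.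
by rewrite -big_split; apply: eq_bigr => k _; rewrite coefD mulrzDr.
Qed.

Lemma poly_actN P x : poly_act (- P) x = - poly_act P x.
Proof.
by rewrite /poly_act size_polyN -sumrN; apply: eq_bigr => k _; rewrite coefN mulrNz.
Qed.

Lemma poly_act_sum n (F : 'I_n -> {poly int}) x :
  poly_act (\sum_(i < n) F i) x = \sum_(i < n) poly_act (F i) x.
Proof. by apply: (big_morph (poly_act^~ x)) => [P Q|]; rewrite ?poly_actD ?poly_act0. Qed.

Lemma poly_actMn P n x : poly_act (P *+ n) x = poly_act P x *+ n.
Proof. by elim: n => [|n IHn]; rewrite ?poly_act0 // !mulrS poly_actD IHn. Qed.

Lemma poly_actMX P x : poly_act (P * 'X) x = poly_act P (f x).
Proof.
have le_PX : (size (P * 'X)%R <= (size P).+1)%N.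
  by rewrite (leq_trans (size_polyMleq _ _)) // size_polyX addn2.
rewrite (@poly_act_widen (size P).+1) // big_ord_recl coefMX /= mulr0z add0r.
by apply: eq_bigr => k _; rewrite coefMX /= -iterS iterSr.
Qed.

Lemma poly_actXn n x : poly_act 'X^n x = iter n f x.
Proof.
elim: n x => [|n IHn] x; last by rewrite exprSr poly_actMX IHn iterSr.
by rewrite expr0 /poly_act size_poly1 big_ord1 coef1 mulr1z.
Qed.

Lemma poly_act_1subX i x : poly_act ((1 - 'X)^+i) x = iter i (fun y => y - f y) x.
Proof.
elim: i x => [|i IHi] x; first by rewrite expr0 -(expr0 'X) poly_actXn.
rewrite exprSr mulrBr mulr1 poly_actD poly_actN poly_actMX !IHi /=.
by rewrite (iter_morph (sub1_morph af (fun=> erefl))).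
Qed.

Lemma addmap_poly_act P : addmap (poly_act P).
Proof. by apply: addmap_sumf => k x y; rewrite (addmap_iter _ af) mulrzDl. Qed.

End PolyAction.

Lemma Nop_sub1_modp (p : nat) (G : zmodType) (f : G -> G) : prime p -> addmap f ->
  exists2 R : G -> G, addmap R &
    forall y, Nop p (fun z => z - f z) y - iter p.-1 f y = R y *+ p.
Proof.
move=> p_pr af; have [R defR] := norm_1subX_modp p_pr.
exists (poly_act f R) => [|y]; first exact: addmap_poly_act.
rewrite -poly_actMn -defR poly_actD poly_actN poly_actXn // poly_act_sum.
by congr (_ - _); apply: eq_bigr => i _; rewrite poly_act_1subX.
Qed.

(** * Kernels of additive maps *)

Section Kernel.
Variables (G H : zmodType) (F : {additive G -> H}).

Definition kernel_pred : {pred G} := fun x => F x == 0.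

Fact kernel_zmod_closed : zmod_closed kernel_pred.
Proof.
split=> [|x y]; rewrite !unfold_in /kernel_pred /= ?raddf0 // raddfB.
by move=> /eqP-> /eqP->; rewrite subrr.
Qed.
HB.instance Definition _ :=
  GRing.isZmodClosed.Build G kernel_pred kernel_zmod_closed.

Inductive kernel : predArgType := Kernel x of x \in kernel_pred.
Definition kval (x : kernel) : G := let: Kernel y _ := x in y.
HB.instance Definition _ := [isSub of kernel for kval].
HB.instance Definition _ := [Choice of kernel by <:].
HB.instance Definition _ := [SubChoice_isSubZmodule of kernel by <:].

Lemma kval_inj : injective kval. Proof. exact: val_inj. Qed.

Lemma addmap_kval : addmap kval. Proof. by []. Qed.

Lemma kvalP (x : kernel) : F (kval x) = 0.
Proof. by case: x => y /= /[!unfold_in] /eqP. Qed.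

Definition kernel_corestr (A : Type) (h : A -> G) (hF : forall a, F (h a) = 0)
  (a : A) : kernel := Kernel (introT eqP (hF a)).

Lemma addmap_kernel_corestr (A : zmodType) (h : A -> G) (hF : forall a, F (h a) = 0) :
  addmap h -> addmap (kernel_corestr hF).
Proof. by move=> ah x y; apply: kval_inj; apply: ah. Qed.

Definition kernel_restr (g : G -> G) (hg : forall x, F x = 0 -> F (g x) = 0) :
  kernel -> kernel := kernel_corestr (fun x => hg _ (kvalP x)).

Variables (g : G -> G) (hg : forall x, F x = 0 -> F (g x) = 0).
Local Notation gK := (kernel_restr hg).

Lemma addmap_kernel_restr : addmap g -> addmap gK.
Proof. by move=> ag x y; apply: kval_inj; apply: ag. Qed.

Lemma kernel_restr_grading : is_grading g -> is_grading gK.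
Proof.
by case=> ag gg; split=> [|x]; [apply: addmap_kernel_restr | apply: kval_inj; apply: gg].
Qed.

Lemma kernel_restr_gr_pres (s : G -> G) (hs : forall x, F x = 0 -> F (s x) = 0) :
  gr_pres s s g -> gr_pres (kernel_restr hs) (kernel_restr hs) gK.
Proof. by move=> gs x; apply: kval_inj; apply: gs. Qed.

Lemma Nop_kernel_restr p x : kval (Nop p gK x) = Nop p g (kval x).
Proof. exact: Nop_morph addmap_kval (fun=> erefl) x. Qed.

End Kernel.

Lemma uniq_pdiv_kernel (p : nat) (G H : zmodType) (F : {additive G -> H}) :
  uniq_pdiv p G -> uniq_pdiv p H -> uniq_pdiv p (kernel F).
Proof.
case=> [ipG mulpKG ipGK] [ipH mulpKH ipHK].
have ipF x : F x = 0 -> F (ipG x) = 0.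
  by move=> Fx; rewrite (addmap_divp (raddfD F) ipGK mulpKH) Fx (mulp_inv0 mulpKH).
exists (kernel_restr ipF) => x; apply: kval_inj.
  by rewrite /= (addmapMn (@addmap_kval _ _ F)) /= mulpKG.
by rewrite (addmapMn (@addmap_kval _ _ F)) /= ipGK.
Qed.

(** * Exact K-modules *)

Section KModule.
Variables (p : nat) (G0 G1 G2 : zmodType).
Variables (a01 : G1 -> G0) (a10 : G0 -> G1) (a12 : G2 -> G1) (a21 : G1 -> G2)
  (a02 : G2 -> G0) (a20 : G0 -> G2).
Hypotheses (add01 : addmap a01) (add10 : addmap a10) (add12 : addmap a12)
  (add21 : addmap a21) (add02 : addmap a02) (add20 : addmap a20).
Hypotheses (a01a12 : forall x, a01 (a12 x) = 0) (a02a21 : forall x, a02 (a21 x) = 0)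
  (a10a02 : forall x, a10 (a02 x) = 0) (a12a20 : forall x, a12 (a20 x) = 0)
  (a20a01 : forall x, a20 (a01 x) = 0) (a21a10 : forall x, a21 (a10 x) = 0).

(* The paper's t0, s1, t2, s2.  Lemma names below write u = a02 a20 on M0, and
   e = a20 a02, f = a21 a12 on M2, so that t0 = 1 - u, t2 = 1 - e, s2 = 1 - f. *)
Local Notation t0 := (fun x => x - a02 (a20 x)).
Local Notation s1 := (fun x => x - a12 (a21 x)).
Local Notation t2 := (fun y => y - a20 (a02 y)).
Local Notation s2 := (fun y => y - a21 (a12 y)).

Hypotheses (norm0 : forall x, a01 (a10 x) = Nop p t0 x)
  (norm1 : forall x, a10 (a01 x) = Nop p s1 x)
  (norm2 : forall y, Nop p t2 y + Nop p s2 y = y *+ p).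

(* Exactness; the reverse inclusions are the relations above. *)
Hypotheses (ker21 : forall y, a21 y = 0 -> exists x, a10 x = y)
  (ker02 : forall y, a02 y = 0 -> exists x, a21 x = y)
  (ker10 : forall y, a10 y = 0 -> exists x, a02 x = y)
  (ker12 : forall y, a12 y = 0 -> exists x, a20 x = y)
  (ker01 : forall y, a01 y = 0 -> exists x, a12 x = y)
  (ker20 : forall y, a20 y = 0 -> exists x, a01 x = y).

Let addu := addmap_comp add02 add20.
Let addv := addmap_comp add12 add21.
Let adde := addmap_comp add20 add02.
Let addf := addmap_comp add21 add12.

Lemma split0 x : x *+ p = a01 (a10 x) + a02 (a20 (Nquo p t0 x)).
Proof. by rewrite norm0 (Nop_sub1 _ addu) subrK. Qed.

Lemma split1 x : x *+ p = a10 (a01 x) + a12 (a21 (Nquo p s1 x)).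
Proof. by rewrite norm1 (Nop_sub1 _ addv) subrK. Qed.

Lemma split2 y : y *+ p = a20 (a02 (Nquo p t2 y)) + a21 (a12 (Nquo p s2 y)).
Proof.
have := norm2 y; rewrite (Nop_sub1 _ adde) (Nop_sub1 _ addf) => /eqP.
by rewrite addrACA -opprD subr_eq addrC -subr_eq addrK => /eqP.
Qed.

Lemma Nop_t2_kerf y : a21 (a12 y) = 0 -> Nop p t2 y = 0.
Proof.
move=> fy; apply: (addIr (y *+ p)); rewrite -{1}(Nop_fixed p (t := s2)) ?fy ?subr0 //.
by rewrite norm2 add0r.
Qed.

Lemma Nop_s2_kere y : a20 (a02 y) = 0 -> Nop p s2 y = 0.
Proof.
move=> ey; apply: (addrI (y *+ p)); rewrite -{1}(Nop_fixed p (t := t2)) ?ey ?subr0 //.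
by rewrite norm2 addr0.
Qed.

Lemma a20_kerf x : a21 (a12 (a20 x)) = 0.
Proof. by rewrite a12a20 addmap0. Qed.

Lemma a21_kere x : a20 (a02 (a21 x)) = 0.
Proof. by rewrite a02a21 addmap0. Qed.

Section DivisibleM2.
Variable ip2 : G2 -> G2.
Hypotheses (mulpK2 : cancel (fun y => y *+ p) ip2) (ip2K : cancel ip2 (fun y => y *+ p)).

Lemma kerf_ime y : a21 (a12 y) = 0 -> y = a20 (a02 (Nquo p t2 (ip2 y))).
Proof.
move=> fy; apply: (split_ker (A := fun y => a20 (a02 (Nquo p t2 y)))
  (B := fun y => a21 (a12 (Nquo p s2 y))) mulpK2 ip2K split2).
  exact: addmap_comp add21 (addmap_comp add12 (addmap_Nquo p (addmap_sub1 addf))).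
exact (Nquo_sub1_ker p addf fy).
Qed.

Lemma kere_imf y : a20 (a02 y) = 0 -> y = a21 (a12 (Nquo p s2 (ip2 y))).
Proof.
move=> ey; apply: (split_ker (A := fun y => a21 (a12 (Nquo p s2 y)))
  (B := fun y => a20 (a02 (Nquo p t2 y))) mulpK2 ip2K).
- by move=> w; rewrite addrC split2.
- exact: addmap_comp add20 (addmap_comp add02 (addmap_Nquo p (addmap_sub1 adde))).
- exact (Nquo_sub1_ker p adde ey).
Qed.

Lemma ker01_ker21_eq0 m : a01 m = 0 -> a21 m = 0 -> m = 0.
Proof. by move=> /ker01 [y <-] /kerf_ime ->. Qed.

Lemma mulp0_inj (x : G0) : x *+ p = 0 -> x = 0.
Proof.
move=> px0; have a20x : a20 x = 0 := addmap_mulp_eq0 add20 mulpK2 px0.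
have ux : a02 (a20 x) = 0 by rewrite a20x addmap0.
have /ker10 [y defx] : a10 x = 0.
  apply: ker01_ker21_eq0 (a21a10 x).
  by have := split0 x; rewrite px0 (Nquo_sub1_ker p addu ux) addr0.
have /kere_imf ey : a20 (a02 y) = 0 by rewrite defx.
by rewrite -defx ey a02a21.
Qed.

Lemma mulp0_surj (x : G0) : exists x1, x1 *+ p = x.
Proof.
set y := Nquo p t2 (ip2 (a20 x)).
have [m Em] : exists m, a01 m = x - a02 y.
  by apply: ker20; rewrite addmapB // -kerf_ime ?subrr // a20_kerf.
set z := Nquo p s2 (ip2 (a21 m)).
have [x1 Ex1] : exists x1, a10 x1 = m - a12 z.
  by apply: ker21; rewrite addmapB // -kere_imf ?subrr // a21_kere.
have a01m : a01 m = x1 *+ p - a02 (a20 (Nquo p t0 x1)).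
  have -> : m = a10 x1 + a12 z by rewrite Ex1 subrK.
  by rewrite add01 a01a12 addr0 split0 addrK.
exists (a02 (ip2 y) + x1 - a02 (ip2 (a20 (Nquo p t0 x1)))).
rewrite mulrnBl mulrnDl -!(addmapMn add02) !ip2K -addrA -a01m Em.
by rewrite addrC subrK.
Qed.

End DivisibleM2.

Lemma uniq_pdiv0_of_2 : uniq_pdiv p G2 -> uniq_pdiv p G0.
Proof.
case=> ip2 mulpK2 ip2K.
by apply: uniq_pdiv_inj_surj; [apply: mulp0_inj | apply: mulp0_surj].
Qed.

Section DivisibleM0.
Hypothesis p_pr : prime p.
Variable ip0 : G0 -> G0.
Hypotheses (mulpK0 : cancel (fun x => x *+ p) ip0) (ip0K : cancel ip0 (fun x => x *+ p)).

Lemma ker_a01a10_imu x : a01 (a10 x) = 0 -> x = a02 (a20 (Nquo p t0 (ip0 x))).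
Proof.
move=> a01a10x; apply: (split_ker (A := fun x => a02 (a20 (Nquo p t0 x)))
  (B := fun x => a01 (a10 x)) mulpK0 ip0K) => //.
- by move=> w; rewrite addrC split0.
- exact: addmap_comp add01 add10.
Qed.

Lemma keru_ima01 x : a02 (a20 x) = 0 -> x = a01 (a10 (ip0 x)).
Proof.
move=> ux; apply: (split_ker (A := fun x => a01 (a10 x))
  (B := fun x => a02 (a20 (Nquo p t0 x))) mulpK0 ip0K split0).
- exact: addmap_comp add02 (addmap_comp add20 (addmap_Nquo p (addmap_sub1 addu))).
- exact (Nquo_sub1_ker p addu ux).
Qed.

Lemma ker02_kerf_eq0 y : a02 y = 0 -> a21 (a12 y) = 0 -> y = 0.
Proof.
move=> a02y /ker21 [x defx].
have /ker12 [x' defy] : a12 y = 0.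
  by rewrite -defx (ker_a01a10_imu (x := x)) ?a10a02 // defx a01a12.
have /keru_ima01 ux' : a02 (a20 x') = 0 by rewrite defy.
by rewrite -defy ux' a20a01.
Qed.

Lemma ker02_f_onto y : a02 y = 0 -> exists2 w, a02 w = 0 & a21 (a12 w) = y.
Proof.
move=> /ker02 [m defy].
have /keru_ima01 ux : a02 (a20 (a01 m)) = 0 by rewrite a20a01 addmap0.
have [y1 defy1] : exists y1, a12 y1 = m - a10 (ip0 (a01 m)).
  by apply: ker01; rewrite addmapB // -ux subrr.
have /ker_a01a10_imu ex : a01 (a10 (a02 y1)) = 0 by rewrite a10a02 addmap0.
exists (y1 - a20 (Nquo p t0 (ip0 (a02 y1)))); first by rewrite addmapB // -ex subrr.
by rewrite addmapB // a12a20 subr0 defy1 addmapB // a21a10 subr0.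
Qed.

Lemma ker02_iter_f_onto k y : a02 y = 0 ->
  exists2 w, a02 w = 0 & iter k (fun w => a21 (a12 w)) w = y.
Proof.
elim: k y => [|k IHk] y a02y; first by exists y.
have [w a02w <-] := IHk y a02y; have [w' a02w' <-] := ker02_f_onto a02w.
by exists w'; rewrite // iterSr.
Qed.

(* On ker a02, where N(s2) vanishes, f is injective and onto, while
   N(s2) = f^(p-1) mod p. *)
Lemma mulp2_inj (y : G2) : y *+ p = 0 -> y = 0.
Proof.
move=> py0; have a02y : a02 y = 0 := addmap_mulp_eq0 add02 mulpK0 py0.
have ey : a20 (a02 y) = 0 by rewrite a02y addmap0.
have [R addR defR] := Nop_sub1_modp p_pr addf.
have : iter p.-1 (fun w => a21 (a12 w)) y = 0.
  have := defR y; rewrite (Nop_s2_kere ey) -(addmapMn addR) py0 (addmap0 addR) sub0r.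
  by move/eqP; rewrite oppr_eq0 => /eqP.
elim: p.-1 y a02y {py0 ey} => // k IHk y a02y; rewrite iterSr => /IHk.
by rewrite a02a21 => /(_ erefl); apply: ker02_kerf_eq0.
Qed.

Lemma mulp2_surj (y : G2) : exists y1, y1 *+ p = y.
Proof.
have /ker_a01a10_imu ex : a01 (a10 (a02 y)) = 0 by rewrite a10a02 addmap0.
set x := Nquo p t0 (ip0 (a02 y)) in ex.
have a02z : a02 (y - a20 x) = 0 by rewrite addmapB // -ex subrr.
have [w a02w defz] := ker02_iter_f_onto p.-1 a02z.
have ew : a20 (a02 w) = 0 by rewrite a02w addmap0.
have [R addR defR] := Nop_sub1_modp p_pr addf.
exists (a20 (ip0 x) - R w).
rewrite mulrnBl -addmapMn // ip0K -defR (Nop_s2_kere ew).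
by rewrite sub0r opprK defz addrC subrK.
Qed.

End DivisibleM0.

Lemma uniq_pdiv2_of_0 : prime p -> uniq_pdiv p G0 -> uniq_pdiv p G2.
Proof.
move=> p_pr [ip0 mulpK0 ip0K].
by apply: uniq_pdiv_inj_surj; [apply: mulp2_inj | apply: mulp2_surj].
Qed.

Definition X := kernel (additive_of add20).
Definition Y := kernel (additive_of addf).
Definition Z := kernel (additive_of adde).

Lemma X_a20 (x : X) : a20 (kval x) = 0. Proof. exact (kvalP x). Qed.
Lemma Y_kerf (y : Y) : a21 (a12 (kval y)) = 0. Proof. exact (kvalP y). Qed.
Lemma Z_kere (z : Z) : a20 (a02 (kval z)) = 0. Proof. exact (kvalP z). Qed.

Section Decomposition.
Variables (ip0 : G0 -> G0) (ip1 : G1 -> G1) (ip2 : G2 -> G2).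
Hypotheses (mulpK0 : cancel (fun x => x *+ p) ip0) (ip0K : cancel ip0 (fun x => x *+ p)).
Hypothesis ip1K : cancel ip1 (fun x => x *+ p).
Hypotheses (mulpK2 : cancel (fun x => x *+ p) ip2) (ip2K : cancel ip2 (fun x => x *+ p)).

(* The projections of M0 onto X along im a02, and of M2 onto Y and Z. *)
Definition PX x := a01 (a10 (ip0 x)).
Definition PY y := a20 (a02 (Nquo p t2 (ip2 y))).
Definition PZ y := a21 (a12 (Nquo p s2 (ip2 y))).

Lemma addmap_PX : addmap PX.
Proof. exact: addmap_comp add01 (addmap_comp add10 (addmap_ip mulpK0 ip0K)). Qed.

Lemma addmap_PY : addmap PY.
Proof.
apply: addmap_comp add20 (addmap_comp add02 (addmap_comp _ (addmap_ip mulpK2 ip2K))).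
exact/addmap_Nquo/addmap_sub1.
Qed.

Lemma addmap_PZ : addmap PZ.
Proof.
apply: addmap_comp add21 (addmap_comp add12 (addmap_comp _ (addmap_ip mulpK2 ip2K))).
exact/addmap_Nquo/addmap_sub1.
Qed.

Lemma PX_id x : a20 x = 0 -> PX x = x.
Proof. by move=> a20x; rewrite [RHS](keru_ima01 mulpK0 ip0K) // a20x addmap0. Qed.

Lemma PX_a02 y : PX (a02 y) = 0.
Proof. by rewrite /PX -(addmap_divp add02 ip2K mulpK0) a10a02 addmap0. Qed.

Lemma PY_id y : a21 (a12 y) = 0 -> PY y = y.
Proof. by move=> fy; rewrite [RHS](kerf_ime mulpK2 ip2K). Qed.

Lemma PZ_id y : a20 (a02 y) = 0 -> PZ y = y.
Proof. by move=> ey; rewrite [RHS](kere_imf mulpK2 ip2K). Qed.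

Lemma PY_kere y : a20 (a02 y) = 0 -> PY y = 0.
Proof.
move=> ey; apply: (Nquo_sub1_ker p adde).
by rewrite (addmap_divp adde ip2K mulpK2) ey (mulp_inv0 mulpK2).
Qed.

Lemma PZ_kerf y : a21 (a12 y) = 0 -> PZ y = 0.
Proof.
move=> fy; apply: (Nquo_sub1_ker p addf).
by rewrite (addmap_divp addf ip2K mulpK2) fy (mulp_inv0 mulpK2).
Qed.

Lemma PY_PZ y : PY y + PZ y = y.
Proof. by rewrite /PY /PZ -split2 ip2K. Qed.

Variables (g0 : G0 -> G0) (g1 : G1 -> G1) (g2 : G2 -> G2).
Hypotheses (grading0 : is_grading g0) (grading2 : is_grading g2).
Hypotheses (pres01 : gr_pres g1 g0 a01) (pres10 : gr_pres g0 g1 a10)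
  (rev12 : gr_rev g2 g1 a12) (rev21 : gr_rev g1 g2 a21)
  (pres02 : gr_pres g2 g0 a02) (pres20 : gr_pres g0 g2 a20).

Let addg0 := grading0.1.
Let addg2 := grading2.1.

Lemma g2_e : {morph g2 : y / a20 (a02 y)}.
Proof. by move=> y; rewrite pres02 pres20. Qed.

Lemma g2_f : {morph g2 : y / a21 (a12 y)}.
Proof. by move=> y; rewrite rev12 addmapB // rev21 opprB addrC subrK. Qed.

Lemma g2_PY y : PY (g2 y) = g2 (PY y).
Proof.
rewrite /PY -(addmap_divp addg2 ip2K mulpK2).
by rewrite -(Nquo_morph p addg2 (sub1_morph addg2 g2_e)) -g2_e.
Qed.

Lemma g2_PZ y : PZ (g2 y) = g2 (PZ y).
Proof.
rewrite /PZ -(addmap_divp addg2 ip2K mulpK2).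
by rewrite -(Nquo_morph p addg2 (sub1_morph addg2 g2_f)) -g2_f.
Qed.

Lemma X_g0 x : a20 x = 0 -> a20 (g0 x) = 0.
Proof. by move=> a20x; rewrite pres20 a20x addmap0. Qed.

Lemma Y_g2 y : a21 (a12 y) = 0 -> a21 (a12 (g2 y)) = 0.
Proof. by move=> fy; rewrite -g2_f fy addmap0. Qed.

Lemma Z_g2 z : a20 (a02 z) = 0 -> a20 (a02 (z - g2 z)) = 0.
Proof. by move=> ez; rewrite (addmapB add02) (addmapB add20) -g2_e ez addmap0 ?subrr. Qed.

Lemma Y_t2 y : a21 (a12 y) = 0 -> a21 (a12 (y - a20 (a02 y))) = 0.
Proof. by move=> fy; rewrite (addmapB add12) (addmapB add21) a20_kerf fy subrr. Qed.

Lemma Z_s2 z : a20 (a02 z) = 0 -> a20 (a02 (z - a21 (a12 z))) = 0.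
Proof. by move=> ez; rewrite (addmapB add02) (addmapB add20) a21_kere ez subrr. Qed.

(* Z sits in M2 = Y (+) Sigma Z with the opposite parity. *)
Definition gX : X -> X := @kernel_restr _ _ (additive_of add20) g0 X_g0.
Definition gY : Y -> Y := @kernel_restr _ _ (additive_of addf) g2 Y_g2.
Definition gZ : Z -> Z := @kernel_restr _ _ (additive_of adde) (fun z => z - g2 z) Z_g2.
Definition thY : Y -> Y := @kernel_restr _ _ (additive_of addf) t2 Y_t2.
Definition thZ : Z -> Z := @kernel_restr _ _ (additive_of adde) s2 Z_s2.

Lemma grZp_X : grZp p gX.
Proof.
split; first exact: kernel_restr_grading.
exact: uniq_pdiv_kernel (additive_of add20) (Bijective mulpK0 ip0K) (Bijective mulpK2 ip2K).
Qed.

Lemma grZthp_Y : grZthp p gY thY.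
Proof.
have div2 := Bijective mulpK2 ip2K.
split.
- exact: kernel_restr_grading.
- exact (uniq_pdiv_kernel (additive_of addf) div2 div2).
- exact/addmap_kernel_restr/addmap_sub1.
- by apply: kernel_restr_gr_pres => y; rewrite addmapB // g2_e.
- by move=> y; apply: kval_inj; rewrite Nop_kernel_restr (Nop_t2_kerf (Y_kerf y)).
Qed.

Lemma grZthp_Z : grZthp p gZ thZ.
Proof.
have div2 := Bijective mulpK2 ip2K.
split.
- by apply: kernel_restr_grading; apply: grading_sub1.
- exact (uniq_pdiv_kernel (additive_of adde) div2 div2).
- exact/addmap_kernel_restr/addmap_sub1.
- apply: kernel_restr_gr_pres => z /=.
  rewrite (addmapB add12) (addmapB add21) (addmapB addg2) -g2_f -!addrA.
  by congr (_ + _); rewrite !opprB addrCA [RHS]addrCA; congr (_ + _); apply: addrC.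
- by move=> z; apply: kval_inj; rewrite Nop_kernel_restr (Nop_s2_kere (Z_kere z)).
Qed.

Definition phi0 (x : G0) : X * Y :=
  (@kernel_corestr _ _ (additive_of add20) _ PX (fun x => a20a01 _) x,
   @kernel_corestr _ _ (additive_of addf) _ a20 a20_kerf x).
Definition phi1 (x : G1) : X * Z :=
  (@kernel_corestr _ _ (additive_of add20) _ a01 a20a01 x,
   @kernel_corestr _ _ (additive_of adde) _ a21 a21_kere x).
Definition phi2 (y : G2) : Y * Z :=
  (@kernel_corestr _ _ (additive_of addf) _ PY (fun y => a20_kerf _) y,
   @kernel_corestr _ _ (additive_of adde) _ PZ (fun y => a21_kere _) y).

Definition psi0 (v : X * Y) : G0 := kval v.1 + a02 (Nquo p t2 (ip2 (kval v.2))).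
Definition psi1 (v : X * Z) : G1 :=
  a10 (ip0 (kval v.1)) + a12 (Nquo p s2 (ip2 (kval v.2))).
Definition psi2 (v : Y * Z) : G2 := kval v.1 + kval v.2.

Lemma phi0K : cancel phi0 psi0.
Proof.
move=> x; rewrite /psi0 /= -(addmap_divp add20 ip0K mulpK2).
rewrite -(Nquo_morph p add20 (sub1_morph add20 (fun=> erefl))).
by rewrite /PX -split0 ip0K.
Qed.

Lemma psi0K : cancel psi0 phi0.
Proof.
move=> [x y]; congr pair; apply: kval_inj => /=.
  by rewrite addmap_PX PX_a02 addr0 PX_id // X_a20.
by rewrite add20 X_a20 add0r; apply: PY_id; apply: Y_kerf.
Qed.

Lemma phi1K : cancel phi1 psi1.
Proof.
move=> x; rewrite /psi1 /= -(addmap_divp add01 ip1K mulpK0).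
rewrite -(addmap_divp add21 ip1K mulpK2).
rewrite -(Nquo_morph p add21 (sub1_morph add21 (fun=> erefl))).
by rewrite -split1 ip1K.
Qed.

Lemma psi1K : cancel psi1 phi1.
Proof.
move=> [x z]; congr pair; apply: kval_inj => /=.
  by rewrite add01 a01a12 addr0; apply: PX_id; apply: X_a20.
by rewrite add21 a21a10 add0r; apply: PZ_id; apply: Z_kere.
Qed.

Lemma phi2K : cancel phi2 psi2.
Proof. exact: PY_PZ. Qed.

Lemma psi2K : cancel psi2 phi2.
Proof.
move=> [y z]; congr pair; apply: kval_inj => /=.
  by rewrite addmap_PY (PY_id (Y_kerf y)) (PY_kere (Z_kere z)) addr0.
by rewrite addmap_PZ (PZ_id (Z_kere z)) (PZ_kerf (Y_kerf y)) add0r.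
Qed.

Lemma Kiso_EK :
  Kiso (RawK G0 G1 G2 g0 g1 g2 a01 a10 a12 a21 a02 a20) (EK p gX gY thY gZ thZ).
Proof.
exists phi0, phi1, phi2; split.
- split; apply: addmap_pair; apply: addmap_kernel_corestr => //.
  + exact: addmap_PX.
  + exact: addmap_PY.
  + exact: addmap_PZ.
- split; [exact: Bijective phi0K psi0K | exact: Bijective phi1K psi1K
         | exact: Bijective phi2K psi2K].
- split=> x; congr pair; apply: kval_inj => /=.
  + by rewrite /PX -(addmap_divp addg0 ip0K mulpK0) pres10 pres01.
  + exact: pres20.
  + exact: pres01.
  + exact: rev21.
  + exact: g2_PY.
  + by rewrite g2_PZ opprB addrC subrK.
- split; split=> x; congr pair; apply: kval_inj => /=.
  + by apply: PX_id; apply: a20a01.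
  + exact: a20a01.
  + by rewrite (addmapMn (@addmap_kval _ _ _)) -(addmapMn add01) -(addmapMn add10) ip0K.
  + exact: a21a10.
  + exact: a01a12.
  + by rewrite opprB addrC subrK -{1}(PY_PZ x) addf a20_kerf add0r.
  + by apply: PY_kere; apply: a21_kere.
  + by apply: PZ_id; apply: a21_kere.
  + exact: PX_a02.
  + by rewrite opprB addrC subrK -{1}(PY_PZ x) adde a21_kere addr0.
  + by apply: PY_id; apply: a20_kerf.
  + by apply: PZ_kerf; apply: a20_kerf.
Qed.

Lemma EK_decomposition :
  exists (X Y Z : zmodType) (gX : X -> X) (gY : Y -> Y) (thY : Y -> Y)
         (gZ : Z -> Z) (thZ : Z -> Z),
    [/\ grZp p gX, grZthp p gY thY, grZthp p gZ thZ &
        Kiso (RawK G0 G1 G2 g0 g1 g2 a01 a10 a12 a21 a02 a20) (EK p gX gY thY gZ thZ)].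
Proof.
exists X, Y, Z, gX, gY, thY, gZ, thZ.
by split; [apply: grZp_X | apply: grZthp_Y | apply: grZthp_Z | apply: Kiso_EK].
Qed.

End Decomposition.
End KModule.

Lemma Kmodule_uniq_pdiv (p : nat) (M : rawK) :
  prime p -> is_Kmodule p M -> is_exactK M ->
  uniq_pdiv p (K0 M) \/ uniq_pdiv p (K1 M) \/ uniq_pdiv p (K2 M) ->
  [/\ uniq_pdiv p (K0 M), uniq_pdiv p (K1 M) & uniq_pdiv p (K2 M)].
Proof.
case: M => G0 G1 G2 g0 g1 g2 a01 a10 a12 a21 a02 a20 p_pr.
rewrite /is_Kmodule /is_exactK /=.
move=> [_ [[add01 add10 add12] [add21 add02 add20]] _
  [[a01a12 a02a21 a10a02] [a12a20 a20a01 a21a10]] [norm0 norm1 norm2]].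
move=> [[/(_ _)/proj1 ker21 /(_ _)/proj1 ker02 /(_ _)/proj1 ker10]
  [/(_ _)/proj1 ker12 /(_ _)/proj1 ker01 /(_ _)/proj1 ker20]].
(* Without the gradings, the data are symmetric under exchanging M0 and M1. *)
have norm2' y : Nop p (fun y => y - a21 (a12 y)) y + Nop p (fun y => y - a20 (a02 y)) y
    = y *+ p by rewrite addrC norm2.
have div20 : uniq_pdiv p G2 -> uniq_pdiv p G0.
  by apply: (@uniq_pdiv0_of_2 p G0 G1 G2 a01 a10 a12 a21 a02 a20).
have div21 : uniq_pdiv p G2 -> uniq_pdiv p G1.
  by apply: (@uniq_pdiv0_of_2 p G1 G0 G2 a10 a01 a02 a20 a12 a21).
have div02 : uniq_pdiv p G0 -> uniq_pdiv p G2.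
  by apply: (@uniq_pdiv2_of_0 p G0 G1 G2 a01 a10 a12 a21 a02 a20).
have div12 : uniq_pdiv p G1 -> uniq_pdiv p G2.
  by apply: (@uniq_pdiv2_of_0 p G1 G0 G2 a10 a01 a02 a20 a12 a21).
by case=> [/div02|[/div12|]] div2; split; auto.
Qed.

Lemma Kmodule_decomposition (p : nat) (M : rawK) : is_Kmodule p M ->
  uniq_pdiv p (K0 M) -> uniq_pdiv p (K1 M) -> uniq_pdiv p (K2 M) ->
  exists (X Y Z : zmodType) (gX : X -> X) (gY : Y -> Y) (thY : Y -> Y)
         (gZ : Z -> Z) (thZ : Z -> Z),
    [/\ grZp p gX, grZthp p gY thY, grZthp p gZ thZ &
        Kiso M (EK p gX gY thY gZ thZ)].
Proof.
case: M => G0 G1 G2 g0 g1 g2 a01 a10 a12 a21 a02 a20; rewrite /is_Kmodule /=.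
move=> [[gr0 _ gr2] [[add01 add10 add12] [add21 add02 add20]]
  [[pres01 pres10 rev12] [rev21 pres02 pres20]]
  [[a01a12 a02a21 a10a02] [a12a20 a20a01 a21a10]] [norm0 norm1 norm2]].
move=> [ip0 mulpK0 ip0K] [ip1 _ ip1K] [ip2 mulpK2 ip2K].
by apply: EK_decomposition; eassumption.
Qed.

Theorem theorem7p2 (p : nat) (M : rawK) :
  prime p -> is_Kmodule p M -> is_exactK M ->
  uniq_pdiv p (K0 M) \/ uniq_pdiv p (K1 M) \/ uniq_pdiv p (K2 M) ->
  [/\ uniq_pdiv p (K0 M), uniq_pdiv p (K1 M), uniq_pdiv p (K2 M) &
   exists (X Y Z : zmodType) (gX : X -> X) (gY : Y -> Y) (thY : Y -> Y)
          (gZ : Z -> Z) (thZ : Z -> Z),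
     [/\ grZp p gX, grZthp p gY thY, grZthp p gZ thZ &
         Kiso M (EK p gX gY thY gZ thZ)]].
Proof.
move=> p_pr KM exM one_div.
have [div0 div1 div2] := Kmodule_uniq_pdiv p_pr KM exM one_div.
by split=> //; apply: Kmodule_decomposition.
Qed.
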